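(* Let $n>1$ be an integer with $F_n=D_n$ such that $n+1$ is prime. Then for every integer $k\ge0$, the integer $m=n(n+1)^k$ satisfies $F_m=D_m$.
   Context: For a composite integer $m$, let $d(m)$ denote the largest divisor of $m$ with $1<d(m)<m$. Define $f$ on integers $m>1$ by $f(m)=m-1$ if $m$ is prime and $f(m)=m-d(m)$ if $m$ is composite. Let $f^{(0)}(m)=m$, $f^{(i)}=f\circ f^{(i-1)}$. Define $F_m=\{m,f(m),f^{(2)}(m),\dots,1\}$, the set of iterates of $f$ from $m$ up to and including the first occurrence of $1$, and let $D_m$ be the set of positive divisors of $m$. *)

From mathcomp Require Import all_boot.
Set Implicit Arguments. Unset Strict Implicit. Unset Printing Implicit Defensive.

(* largest divisor d of m with 1 < d < m (meaningful for composite m) *)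
Definition dlarge (m : nat) : nat := \max_(2 <= d < m | d %| m) d.

Definition f (m : nat) : nat := if prime m then m.-1 else m - dlarge m.

(* x belongs to F_m: x is an iterate f^(i)(m) with no earlier iterate equal to 1 *)
Definition inF (m x : nat) : Prop :=
  exists i, iter i f m = x /\ forall j, j < i -> iter j f m <> 1.

Definition F_eq_D (m : nat) : Prop :=
  forall x, inF m x <-> (0 < x /\ x %| m).

(** For [x > 1], [f x = x - x %/ pdiv x].  If [d %| n] and [p = n + 1] is prime then
    [pdiv d <= d < p], so multiplying [d] by a power of [p] does not change its least
    prime factor and [f (d * p ^ j) = f d * p ^ j]; moreover [f (p ^ j.+1) = n * p ^ j].
    Hence the orbit of [n * p ^ k] runs through the orbit of [n] scaled by [p ^ k],
    reaches [p ^ k], steps to [n * p ^ (k - 1)] and repeats: it consists exactly of the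
    numbers [d * p ^ e] with [d %| n] and [e <= k], i.e. of the divisors of [n * p ^ k]. *)
From mathcomp Require Import all_boot zify.

Lemma dlarge_ge x d : 2 <= d < x -> d %| x -> d <= dlarge x.
Proof.
move=> /andP[d2 dx] dvd_dx; rewrite /dlarge.
by apply: (leq_bigmax_seq (F := id)); rewrite // mem_index_iota d2 dx.
Qed.

Lemma dlarge_pdiv x : 1 < x -> ~~ prime x -> dlarge x = x %/ pdiv x.
Proof.
move=> x_gt1 x_np; have q_pr := pdiv_prime x_gt1.
apply/eqP; rewrite eqn_leq; apply/andP; split.
  apply/bigmax_leqP_seq => d; rewrite mem_index_iota => /andP[d2 dx] /dvdnP[e x_ed].
  have e_gt1 : 1 < e by move: dx d2; rewrite x_ed; case: e {x_ed} => [|[|e]]; lia.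
  have q_le_e : pdiv x <= e by apply: pdiv_min_dvd; rewrite // x_ed dvdn_mulr.
  have -> : d = x %/ e by rewrite x_ed mulKn //; lia.
  by apply: leq_div2l; rewrite ?pdiv_gt0.
have x_gt0 : 0 < x by lia.
apply: dlarge_ge; last exact: dvdn_div (pdiv_dvd x).
have -> : x %/ pdiv x < x by rewrite ltn_Pdiv ?prime_gt1.
rewrite andbT.
have : x = pdiv x * (x %/ pdiv x) by rewrite mulnC divnK ?pdiv_dvd.
case: (x %/ pdiv x) => [|[|//]]; first lia.
by rewrite muln1 => x_q; rewrite x_q q_pr in x_np.
Qed.

Lemma f_pdiv x : 1 < x -> f x = x - x %/ pdiv x.
Proof.
move=> x_gt1; rewrite /f; case: ifPn => [x_pr | x_np] /=; last by rewrite dlarge_pdiv.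
by rewrite pdiv_id // divnn (ltnW x_gt1) subn1.
Qed.

Lemma pdiv_mul_prime_pow d p j :
  prime p -> 1 < d -> pdiv d <= p -> pdiv (d * p ^ j) = pdiv d.
Proof.
move=> p_pr d_gt1 qd_le_p.
have m_gt1 : 1 < d * p ^ j by rewrite (leq_trans d_gt1) // leq_pmulr ?expn_gt0 ?prime_gt0.
have q_pr := pdiv_prime m_gt1.
apply/eqP; rewrite eqn_leq; apply/andP; split.
  by apply: pdiv_min_dvd; rewrite ?prime_gt1 ?pdiv_prime // dvdn_mulr ?pdiv_dvd.
have := pdiv_dvd (d * p ^ j); rewrite Euclid_dvdM // => /orP[q_d | q_pj].
  by apply: pdiv_min_dvd; rewrite ?prime_gt1.
by move: q_pj; rewrite Euclid_dvdX // dvdn_prime2 // => /andP[/eqP-> _].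
Qed.

Lemma f_mul_prime_pow d p j :
  prime p -> 1 < d -> pdiv d <= p -> f (d * p ^ j) = f d * p ^ j.
Proof.
move=> p_pr d_gt1 qd_le_p.
have m_gt1 : 1 < d * p ^ j by rewrite (leq_trans d_gt1) // leq_pmulr ?expn_gt0 ?prime_gt0.
rewrite !f_pdiv // pdiv_mul_prime_pow // mulnBl.
by rewrite divn_mulAC ?pdiv_dvd.
Qed.

Lemma f_prime_powS p j : prime p -> f (p ^ j.+1) = p.-1 * p ^ j.
Proof.
move=> p_pr; have p_gt1 := prime_gt1 p_pr.
have pj_gt1 : 1 < p ^ j.+1 by rewrite -(exp1n j.+1) ltn_exp2r.
rewrite f_pdiv // pdiv_pfactor // expnS mulKn ?prime_gt0 //.
by rewrite -subn1 mulnBl mul1n.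
Qed.

Lemma dvdn_mul_prime_pow {n p k x} : prime p -> x %| n * p ^ k ->
  exists a e, [/\ a %| n, e <= k & x = a * p ^ e].
Proof.
move=> p_pr; elim: k x => [|k IH] x x_dvd.
  by exists x, 0; rewrite expn0 !muln1 in x_dvd *.
have [/dvdnP[y x_yp] | p_ndvd] := boolP (p %| x).
  move: x_dvd; rewrite {}x_yp expnS mulnCA mulnC dvdn_pmul2l ?prime_gt0 // => /IH.
  by move=> [a [e [a_n e_k ->]]]; exists a, e.+1; rewrite expnS mulnCA mulnC.
have x_cop : coprime x (p ^ k.+1) by rewrite coprimeXr // coprime_sym prime_coprime.
by exists x, 0; rewrite muln1 -(Gauss_dvdl n x_cop).
Qed.

Section OrbitOfMulPrimePow.

Variables (n T : nat).
Hypothesis n_gt0 : 0 < n.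
Hypothesis p_pr : prime n.+1.
Hypothesis FD_n : F_eq_D n.
Hypothesis orbit_end : iter T f n = 1.
Hypothesis orbit_before_end : forall j, j < T -> iter j f n <> 1.

Local Notation p := n.+1.

Variable k : nat.

Lemma iter_dvd {i} : i <= T -> 0 < iter i f n /\ iter i f n %| n.
Proof. by move=> i_T; apply/FD_n; exists i; split => // j ji; apply: orbit_before_end; lia. Qed.

Lemma iter_mul_pow j i : i <= T -> iter i f (n * p ^ j) = iter i f n * p ^ j.
Proof.
elim: i => [|i IH] i_T //; rewrite !iterS IH ?(ltnW i_T) //.
have [d_gt0 d_n] := iter_dvd (ltnW i_T).
have d_gt1 : 1 < iter i f n by have := orbit_before_end _ i_T; lia.
apply: f_mul_prime_pow => //; apply: leq_trans (pdiv_leq d_gt0) _.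
exact: leq_trans (dvdn_leq n_gt0 d_n) _.
Qed.

Lemma iter_blocks c : c <= k -> iter (c * T.+1) f (n * p ^ k) = n * p ^ (k - c).
Proof.
elim: c => [|c IH] c_k; first by rewrite subn0.
rewrite mulSn iterD IH 1?ltnW // iterS iter_mul_pow // orbit_end mul1n.
by rewrite (_ : k - c = (k - c.+1).+1) 1?f_prime_powS //; lia.
Qed.

Lemma iter_blocks_offset c i : c <= k -> i <= T ->
  iter (c * T.+1 + i) f (n * p ^ k) = iter i f n * p ^ (k - c).
Proof. by move=> c_k i_T; rewrite addnC iterD iter_blocks // iter_mul_pow. Qed.

Lemma index_blocks {I} : I <= k * T.+1 + T ->
  exists c i, [/\ c <= k, i <= T & I = c * T.+1 + i].
Proof.
move=> I_le; exists (I %/ T.+1), (I %% T.+1); split; last exact: divn_eq.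
- by rewrite -ltnS ltn_divLR // mulSn; lia.
- by rewrite -ltnS ltn_mod.
Qed.

Lemma iter_end : iter (k * T.+1 + T) f (n * p ^ k) = 1.
Proof. by rewrite iter_blocks_offset // subnn muln1. Qed.

Lemma iter_before_end I : I < k * T.+1 + T -> iter I f (n * p ^ k) <> 1.
Proof.
move=> I_lt; have [c [i [c_k i_T I_eq]]] := index_blocks (ltnW I_lt).
rewrite {}I_eq in I_lt *.
rewrite iter_blocks_offset // => /eqP; rewrite muln_eq1 => /andP[/eqP d1].
rewrite -(expn0 p) eqn_exp2l // => /eqP kc.
have : ~ i < T by move=> i_lt; exact: orbit_before_end _ i_lt d1.
have c_eq_k : c = k by lia.
by move: I_lt; rewrite c_eq_k; lia.
Qed.

Lemma inF_mul_pow x : inF (n * p ^ k) x <->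
  exists c i, [/\ c <= k, i <= T & x = iter i f n * p ^ (k - c)].
Proof.
split=> [[I [<- I_first]] | [c [i [c_k i_T ->]]]].
  have I_le : I <= k * T.+1 + T.
    by rewrite leqNgt; apply/negP => I_gt; exact: I_first _ I_gt iter_end.
  have [c [i [c_k i_T ->]]] := index_blocks I_le.
  by exists c, i; rewrite iter_blocks_offset.
exists (c * T.+1 + i); rewrite iter_blocks_offset //; split => // j j_lt.
apply: iter_before_end; apply: leq_trans j_lt _.
by rewrite leq_add // leq_mul2r c_k orbT.
Qed.

Lemma F_eq_D_mul_pow : F_eq_D (n * p ^ k).
Proof.
move=> x; rewrite inF_mul_pow; split.
  move=> [c [i [_ i_T ->]]]; have [d_gt0 d_n] := iter_dvd i_T.
  by rewrite muln_gt0 d_gt0 expn_gt0 dvdn_mul // dvdn_exp2l // leq_subr.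
move=> [x_gt0 /(dvdn_mul_prime_pow p_pr) [a [e [a_n e_k x_ae]]]].
have a_gt0 : 0 < a by move: x_gt0; rewrite x_ae muln_gt0 => /andP[].
have [i [a_i i_first]] : inF n a by apply/FD_n.
have i_T : i <= T.
  by rewrite leqNgt; apply/negP => T_lt; exact: i_first _ T_lt orbit_end.
by exists (k - e), i; rewrite subKn // a_i x_ae leq_subr.
Qed.

End OrbitOfMulPrimePow.

Theorem proposition5 (n : nat) :
  1 < n -> F_eq_D n -> prime n.+1 ->
  forall k : nat, F_eq_D (n * n.+1 ^ k).
Proof.
move=> n_gt1 FD_n p_pr.
have [T [orbit_end orbit_before_end]] : inF n 1 by apply/FD_n; rewrite dvd1n.
exact: (F_eq_D_mul_pow n T (ltnW n_gt1) p_pr FD_n orbit_end orbit_before_end).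
Qed.
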